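(* For subdistributions $\mu,\nu$ over nondeterministic expressions, the following are equivalent: (a) $\mu\xRightarrow{\tau}\nu$; (b) there is $\rho$ with $\mu\xrightarrow{\tau}\rho$ (combined transition) and $\rho\Rightarrow\nu$; (c) there is a derivation $(\nu_i^{\to},\nu_i^{\times})_{i\in\mathbb N}$ with $\mu=\nu_0^{\to}+\nu_0^{\times}$, $\nu=\sum_{i\in\mathbb N}\nu_i^{\times}$ and $\nu_0^{\times}=\emptyset$.
   Context: Fix a set $\mathsf{Act}$ of actions containing $\tau$. Nondeterministic expressions: $E ::= 0 \mid X \mid \alpha.P \mid \mathrm{rec}\,X.E \mid E + E$; probabilistic expressions: $P ::= \partial(E) \mid P \oplus_p P$ ($0<p<1$). Subdistributions $\mu$ over $S$: $\mu:S\to\mathbb R_{\ge0}$ with $|\mu|=\sum\mu(s)\le1$; $\delta_s$ Dirac, $\emptyset$ empty; operations pointwise. Semantics: least relations with $\partial(E)\mapsto\delta_E$; $P\oplus_pQ\mapsto p\mu+(1-p)\nu$ if $P\mapsto\mu,Q\mapsto\nu$; $\alpha.P\xrightarrow{\alpha}\mu$ if $P\mapsto\mu$; $\mathrm{rec}\,X.E\xrightarrow{\alpha}\mu$ if $E[\mathrm{rec}\,X.E/X]\xrightarrow{\alpha}\mu$; $E+F\xrightarrow{\alpha}\mu$ and $F+E\xrightarrow{\alpha}\mu$ if $E\xrightarrow{\alpha}\mu$. Combined transitions on subdistributions: least relation with $\delta_E\xrightarrow{\alpha}\mu$ if $E\xrightarrow{\alpha}\mu$, closed under $\sum p_i\nu_i\xrightarrow{\alpha}\sum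 p_i\mu_i$ ($\nu_i\xrightarrow{\alpha}\mu_i$, $p_i\ge0$, $\sum p_i\le1$). A derivation is a sequence $(\mu_i^{\to},\mu_i^{\times})_{i\in\mathbb N}$ of subdistributions with $\mu_i^{\to}\xrightarrow{\tau}\mu^{\to}_{i+1}+\mu^{\times}_{i+1}$ for all $i$; $\mu\Rightarrow\nu$ iff some derivation has $\mu=\mu_0^{\to}+\mu_0^{\times}$ and $\nu=\sum_i\mu_i^\times$. $\mu\xRightarrow{\alpha}\nu$ iff $\mu\Rightarrow\rho\xrightarrow{\alpha}\eta\Rightarrow\nu$ for some $\rho,\eta$. *)

From Stdlib Require Import Reals List ClassicalEpsilon.
From Coquelicot Require Import Coquelicot.
Open Scope R_scope.

Set Implicit Arguments.

Section Syntax.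
Variable Act : Type.

Inductive nexp : Type :=
| NNil  : nexp
| NVar  : nat -> nexp
| NPre  : Act -> pexp -> nexp
| NRec  : nat -> nexp -> nexp
| NSum  : nexp -> nexp -> nexp
with pexp : Type :=
| PDist : nexp -> pexp
| PChoice : forall p : R, 0 < p < 1 -> pexp -> pexp -> pexp.

Fixpoint nsubst (E : nexp) (X : nat) (F : nexp) : nexp :=
  match E with
  | NNil => NNil
  | NVar Y => if Nat.eqb X Y then F else NVar Y
  | NPre a P => NPre a (psubst P X F)
  | NRec Y E' => if Nat.eqb X Y then NRec Y E' else NRec Y (nsubst E' X F)
  | NSum E1 E2 => NSum (nsubst E1 X F) (nsubst E2 X F)
  end
with psubst (P : pexp) (X : nat) (F : nexp) : pexp :=
  match P with
  | PDist E => PDist (nsubst E X F)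
  | PChoice p hp P1 P2 => PChoice hp (psubst P1 X F) (psubst P2 X F)
  end.

Definition sdist := nexp -> R.

Definition dirac (E : nexp) : sdist :=
  fun s => if excluded_middle_informative (s = E) then 1 else 0.

Definition empty_dist : sdist := fun _ => 0.

Fixpoint sum_list (l : list R) : R :=
  match l with nil => 0 | x :: l' => x + sum_list l' end.

(* mu is a subdistribution: nonnegative with total mass |mu| <= 1
   (total mass = sup of sums over finite sets of distinct expressions). *)
Definition subdist (mu : sdist) : Prop :=
  (forall s, 0 <= mu s) /\
  (forall l : list nexp, NoDup l -> sum_list (map mu l) <= 1).

Inductive pstep : pexp -> sdist -> Prop :=
| ps_dist E : pstep (PDist E) (dirac E)
| ps_choice p (hp : 0 < p < 1) P Q mu nu :
    pstep P mu -> pstep Q nu ->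
    pstep (PChoice hp P Q) (fun s => p * mu s + (1 - p) * nu s)
with nstep : nexp -> Act -> sdist -> Prop :=
| ns_pre a P mu : pstep P mu -> nstep (NPre a P) a mu
| ns_rec X E a mu : nstep (nsubst E X (NRec X E)) a mu -> nstep (NRec X E) a mu
| ns_suml E F a mu : nstep E a mu -> nstep (NSum E F) a mu
| ns_sumr E F a mu : nstep E a mu -> nstep (NSum F E) a mu.

(* Combined transitions on subdistributions: least relation containing
   delta_E --a--> mu for E --a--> mu, closed under countable convex
   combinations sum_{i in I} p_i nu_i --a--> sum_{i in I} p_i mu_i
   with p_i >= 0 and sum_{i in I} p_i <= 1 (I a subset of nat). *)
Inductive ctrans (a : Act) : sdist -> sdist -> Prop :=
| ct_dirac E mu : nstep E a mu -> ctrans a (dirac E) mu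
| ct_comb (I : nat -> bool) (p : nat -> R) (nu mu : nat -> sdist) (nu' mu' : sdist) :
    (forall i, I i = true -> ctrans a (nu i) (mu i)) ->
    (forall i, 0 <= p i) ->
    (exists P, is_series (fun i => if I i then p i else 0) P /\ P <= 1) ->
    (forall s, is_series (fun i => if I i then p i * nu i s else 0) (nu' s)) ->
    (forall s, is_series (fun i => if I i then p i * mu i s else 0) (mu' s)) ->
    ctrans a nu' mu'.

Definition derivation (tau : Act) (mt mx : nat -> sdist) : Prop :=
  (forall i, subdist (mt i) /\ subdist (mx i)) /\
  (forall i, ctrans tau (mt i) (fun s => mt (S i) s + mx (S i) s)).

Definition wtrans (tau : Act) (mu nu : sdist) : Prop :=
  exists mt mx : nat -> sdist, derivation tau mt mx /\
    (forall s, mu s = mt 0%nat s + mx 0%nat s) /\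
    (forall s, is_series (fun i => mx i s) (nu s)).

Definition wtrans_act (tau a : Act) (mu nu : sdist) : Prop :=
  exists rho eta, wtrans tau mu rho /\ ctrans a rho eta /\ wtrans tau eta nu.

End Syntax.

(* Condition (b) gives (a) through the trivial derivation mu ==> mu, and (b) and (c) are the
   same derivation shifted by one step.  The content is (a) => (c): let mu ==> rho along
   (mt, mx), rho --tau--> eta and eta ==> nu.  Combined transitions are linear for countable
   decompositions, so the transition splits into mx_k --tau--> eta_k with eta = sum_k eta_k,
   and the derivation from eta splits, proportionally at every step, into chains from the
   eta_k.  Grafting the k-th chain onto the first derivation at time k, where mx_k would have
   stopped, gives a derivation from mu to nu that stops nothing at time 0.  Its steps are
   countable sums of combined transitions, and such a sum is again a combined transition when
   its source is a subdistribution: flattened into weighted point transitions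
   delta_E --tau--> mu_E, the weights are bounded by the mass of the source. *)

From Stdlib Require Import Reals List ClassicalEpsilon Lra Lia FunctionalExtensionality.
From Coquelicot Require Import Coquelicot.
Open Scope R_scope.

Definition scons {A : Type} (x : A) (f : nat -> A) (n : nat) : A :=
  match n with O => x | S n' => f n' end.

Lemma sum_n_nonneg (a : nat -> R) n : (forall k, 0 <= a k) -> 0 <= sum_n a n.
Proof.
  intros Ha; induction n as [|n IH]; [rewrite sum_O; auto|].
  rewrite sum_Sn; unfold plus; simpl; specialize (Ha (S n)); lra.
Qed.

Lemma sum_n_le (a b : nat -> R) n : (forall k, a k <= b k) -> sum_n a n <= sum_n b n.
Proof.
  intros Hab; induction n as [|n IH]; [rewrite !sum_O; auto|].
  rewrite !sum_Sn; unfold plus; simpl; specialize (Hab (S n)); lra.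
Qed.

Lemma sum_n_scons (x : R) (a : nat -> R) n : sum_n (scons x a) (S n) = x + sum_n a n.
Proof.
  induction n as [|n IH].
  - rewrite sum_Sn, !sum_O. reflexivity.
  - rewrite sum_Sn, IH, (sum_Sn a). unfold plus; simpl. ring.
Qed.

Lemma sum_n_diagonal_S (f : nat -> nat -> R) n :
  sum_n (fun k => f k (S n - k)%nat) (S n) = sum_n (fun k => f k (S (n - k))) n + f (S n) 0%nat.
Proof.
  rewrite sum_Sn, Nat.sub_diag. apply (f_equal2 Rplus); [|reflexivity].
  apply sum_n_ext_loc. intros k Hk. f_equal. lia.
Qed.

Lemma sum_n_le_series (a : nat -> R) l n :
  (forall k, 0 <= a k) -> is_series a l -> sum_n a n <= l.
Proof.
  intros Ha Hl. apply (is_lim_seq_incr_compare (sum_n a) l Hl).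
  intro k. rewrite sum_Sn. unfold plus; simpl. specialize (Ha (S k)). lra.
Qed.

Lemma term_le_series (a : nat -> R) l n :
  (forall k, 0 <= a k) -> is_series a l -> a n <= l.
Proof.
  intros Ha Hl. apply Rle_trans with (sum_n a n); [|now apply sum_n_le_series].
  destruct n as [|n]; [rewrite sum_O; lra|].
  rewrite sum_Sn; unfold plus; simpl. pose proof (sum_n_nonneg a n Ha). lra.
Qed.

Lemma series_nonneg (a : nat -> R) l : (forall k, 0 <= a k) -> is_series a l -> 0 <= l.
Proof. intros Ha Hl. apply Rle_trans with (a 0%nat); [apply Ha | now apply term_le_series]. Qed.

Lemma series_le (a b : nat -> R) la lb :
  (forall n, a n <= b n) -> is_series a la -> is_series b lb -> la <= lb.
Proof. intros Hab Ha Hb. exact (is_lim_seq_le _ _ la lb (fun n => sum_n_le a b n Hab) Ha Hb). Qed.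

Lemma series_le_bound (a : nat -> R) l M : is_series a l -> (forall n, sum_n a n <= M) -> l <= M.
Proof. intros Hl HM. exact (is_lim_seq_le _ (fun _ => M) l M HM Hl (is_lim_seq_const M)). Qed.

Lemma series_nonneg_eq0 (a : nat -> R) : (forall k, 0 <= a k) -> is_series a 0 -> forall n, a n = 0.
Proof. intros Ha H0 n. pose proof (term_le_series a 0 n Ha H0). specialize (Ha n). lra. Qed.

Lemma is_series_bounded (a : nat -> R) M :
  (forall k, 0 <= a k) -> (forall n, sum_n a n <= M) -> exists l, is_series a l /\ l <= M.
Proof.
  intros Ha HM.
  assert (Hincr : forall n, sum_n a n <= sum_n a (S n)).
  { intro n. rewrite sum_Sn. unfold plus; simpl. specialize (Ha (S n)). lra. }
  destruct (ex_finite_lim_seq_incr _ M Hincr HM) as [l Hl].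
  exists l. split; [exact Hl | now apply (series_le_bound a)].
Qed.

(* [is_series_scal_l] with [scal] unfolded, so that it unifies with products in [R]. *)
Lemma is_series_mult_l (c : R) (a : nat -> R) l : is_series a l -> is_series (fun n => c * a n) (c * l).
Proof. exact (is_series_scal_l c a l). Qed.

Lemma is_series_scons (x : R) (a : nat -> R) l : is_series a l -> is_series (scons x a) (x + l).
Proof.
  intros Hl. apply is_series_decr_1. unfold plus, opp; simpl.
  assert (E : x + l + - x = l) by ring. rewrite E. exact Hl.
Qed.

Lemma is_series_tail (a : nat -> R) l : is_series a l -> is_series (fun k => a (S k)) (l - a 0%nat).
Proof.
  intros Hl. apply is_series_incr_1. unfold plus; simpl.
  assert (E : l - a 0%nat + a 0%nat = l) by ring. rewrite E. exact Hl.
Qed.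

Lemma is_series_finite (a : nat -> R) N : (forall k, (N < k)%nat -> a k = 0) -> is_series a (sum_n a N).
Proof.
  intros Hz. apply (proj2 (is_lim_seq_incr_n (sum_n a) N (sum_n a N))).
  eapply is_lim_seq_ext; [|apply is_lim_seq_const].
  intro n; simpl; induction n as [|n IH]; [reflexivity|].
  replace (S n + N)%nat with (S (n + N)) by lia.
  rewrite sum_Sn, <- IH, Hz by lia. unfold plus; simpl. symmetry; apply Rplus_0_r.
Qed.

Lemma is_series_0 : is_series (fun _ : nat => 0) 0.
Proof.
  pose proof (is_series_finite (fun _ : nat => 0) 0 (fun _ _ => eq_refl)) as H.
  now rewrite sum_O in H.
Qed.

Lemma is_series_unit (c : R) : is_series (scons c (fun _ => 0)) c.
Proof. rewrite <- (Rplus_0_r c) at 2. exact (is_series_scons c _ 0 is_series_0). Qed.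

Lemma is_series_delay (a : nat -> R) l i :
  is_series a l -> is_series (fun d => if Nat.leb i d then a (d - i)%nat else 0) l.
Proof.
  revert a l; induction i as [|i IH]; intros a l Hl.
  - apply (is_series_ext a); [|exact Hl]. intro n. simpl. now rewrite Nat.sub_0_r.
  - rewrite <- (Rplus_0_l l).
    apply (is_series_ext (scons 0 (fun d => if Nat.leb i d then a (d - i)%nat else 0))).
    + now intros [|n].
    + apply is_series_scons, IH, Hl.
Qed.

Lemma is_lim_seq_sum_n (u : nat -> nat -> R) (l : nat -> R) J :
  (forall j, is_lim_seq (u j) (l j)) -> is_lim_seq (fun n => sum_n (fun j => u j n) J) (sum_n l J).
Proof.
  intros Hu; induction J as [|J IH].
  - rewrite sum_O. apply (is_lim_seq_ext (u 0%nat)); [intro n; now rewrite sum_O | apply Hu].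
  - rewrite sum_Sn. apply (is_lim_seq_ext (fun n => sum_n (fun j => u j n) J + u (S J) n)).
    + intro n. now rewrite sum_Sn.
    + exact (is_lim_seq_plus' _ _ _ _ IH (Hu (S J))).
Qed.

Lemma sum_n_rows_le (a : nat -> nat -> R) (r c : nat -> R) C I :
  (forall i j, 0 <= a i j) -> (forall i, is_series (a i) (r i)) ->
  (forall j, is_series (fun i => a i j) (c j)) -> is_series c C -> sum_n r I <= C.
Proof.
  intros Ha Hr Hc HC.
  apply (is_lim_seq_le (fun n => sum_n (fun i => sum_n (a i) n) I) (fun _ => C) (sum_n r I) C);
    [| exact (is_lim_seq_sum_n _ _ I Hr) | apply is_lim_seq_const].
  intro n. rewrite sum_n_switch. apply Rle_trans with (sum_n c n).
  - apply sum_n_le. intro j. apply (sum_n_le_series (fun i => a i j)); auto.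
  - apply sum_n_le_series; auto. intro j. apply (series_nonneg (fun i => a i j)); auto.
Qed.

Lemma is_series_swap (a : nat -> nat -> R) (r : nat -> R) S :
  (forall i j, 0 <= a i j) -> (forall i, is_series (a i) (r i)) -> is_series r S ->
  (forall j, is_series (fun i => a i j) (Series (fun i => a i j))) /\
  is_series (fun j => Series (fun i => a i j)) S.
Proof.
  intros Ha Hr HS.
  assert (Hc : forall j, is_series (fun i => a i j) (Series (fun i => a i j))).
  { intro j. apply Series_correct.
    apply (ex_series_le (fun i => a i j) r); [|now exists S].
    intro i. rewrite Rabs_pos_eq by apply Ha. now apply term_le_series. }
  split; [exact Hc|].
  destruct (is_series_bounded (fun j => Series (fun i => a i j)) S) as [C [HC HCS]].
  - intro j. apply (series_nonneg (fun i => a i j)); auto.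
  - intro J. apply (sum_n_rows_le (fun j i => a i j) _ r S); auto.
  - replace S with C; [exact HC|]. apply Rle_antisym; [exact HCS|].
    apply (series_le_bound r); [exact HS|].
    intro I. now apply (sum_n_rows_le a r (fun j => Series (fun i => a i j))).
Qed.

Lemma is_series_diagonal (a : nat -> nat -> R) (r : nat -> R) S :
  (forall i j, 0 <= a i j) -> (forall i, is_series (a i) (r i)) -> is_series r S ->
  is_series (fun d => sum_n (fun i => a i (d - i)%nat) d) S.
Proof.
  intros Ha Hr HS.
  set (b i d := if Nat.leb i d then a i (d - i)%nat else 0).
  assert (Hb : forall i d, 0 <= b i d).
  { intros i d. unfold b. destruct (Nat.leb i d); [apply Ha | lra]. }
  destruct (is_series_swap b r S Hb (fun i => is_series_delay (a i) (r i) i (Hr i)) HS) as [Hcol Hsum].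
  apply (is_series_ext (fun d => Series (fun i => b i d))); [|exact Hsum].
  intro d. apply is_series_unique.
  replace (sum_n (fun i => a i (d - i)%nat) d) with (sum_n (fun i => b i d) d).
  - apply is_series_finite. intros k Hk. unfold b.
    destruct (Nat.leb k d) eqn:E; [apply Nat.leb_le in E; lia | reflexivity].
  - apply sum_n_ext_loc. intros i Hi. unfold b. now rewrite (proj2 (Nat.leb_le i d) Hi).
Qed.

Lemma sum_list_map_plus {T} (f g : T -> R) l :
  sum_list (map (fun x => f x + g x) l) = sum_list (map f l) + sum_list (map g l).
Proof. induction l as [|x l IH]; simpl; [ring | rewrite IH; ring]. Qed.

Lemma sum_list_map_scal {T} (c : R) (f : T -> R) l :
  sum_list (map (fun x => c * f x) l) = c * sum_list (map f l).
Proof. induction l as [|x l IH]; simpl; [ring | rewrite IH; ring]. Qed.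

Lemma sum_list_map_ext {T} (f g : T -> R) l :
  (forall x, In x l -> f x = g x) -> sum_list (map f l) = sum_list (map g l).
Proof. induction l as [|x l IH]; simpl; intros H; [reflexivity|]. rewrite H, IH; auto. Qed.

Lemma sum_list_map_le {T} (f g : T -> R) l :
  (forall x, In x l -> f x <= g x) -> sum_list (map f l) <= sum_list (map g l).
Proof.
  induction l as [|x l IH]; simpl; intros H; [lra|].
  pose proof (H x (or_introl eq_refl)). pose proof (IH (fun y Hy => H y (or_intror Hy))). lra.
Qed.

Lemma sum_list_map_nonneg {T} (f : T -> R) l : (forall x, In x l -> 0 <= f x) -> 0 <= sum_list (map f l).
Proof.
  induction l as [|x l IH]; simpl; intros H; [lra|].
  pose proof (H x (or_introl eq_refl)). pose proof (IH (fun y Hy => H y (or_intror Hy))). lra.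
Qed.

Lemma sum_list_map_swap {T U} (F : T -> U -> R) (L : list T) (M : list U) :
  sum_list (map (fun x => sum_list (map (F x) M)) L) =
  sum_list (map (fun u => sum_list (map (fun x => F x u) L)) M).
Proof.
  induction L as [|x L IH]; simpl.
  - induction M as [|u M IHM]; simpl; [reflexivity | rewrite <- IHM; ring].
  - rewrite IH, <- sum_list_map_plus. reflexivity.
Qed.

Lemma sum_list_flat_map_seq {T} (F : T -> R) (A : nat -> list T) D :
  sum_list (map F (flat_map A (seq 0 (S D)))) = sum_n (fun n => sum_list (map F (A n))) D.
Proof.
  assert (Happ : forall l1 l2, sum_list (l1 ++ l2) = sum_list l1 + sum_list l2).
  { intros l1 l2. induction l1 as [|x l1 IH]; simpl; [ring | rewrite IH; ring]. }
  induction D as [|D IH].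
  - simpl. rewrite sum_O, app_nil_r. reflexivity.
  - rewrite seq_S, flat_map_app, map_app, Happ, IH, sum_Sn. simpl. rewrite app_nil_r. reflexivity.
Qed.

Lemma is_series_sum_list {T} (f : nat -> T -> R) (g : T -> R) l :
  (forall x, In x l -> is_series (fun i => f i x) (g x)) ->
  is_series (fun i => sum_list (map (f i) l)) (sum_list (map g l)).
Proof.
  induction l as [|x l IH]; simpl; intros H.
  - exact is_series_0.
  - apply (is_series_plus (fun i => f i x) _ (g x)); auto.
Qed.

Lemma is_series_nth {T} (f : T -> R) (L : list T) (d : T) :
  is_series (fun i => if Nat.ltb i (length L) then f (nth i L d) else 0) (sum_list (map f L)).
Proof.
  induction L as [|x L IH]; simpl.
  - apply (is_series_ext (fun _ => 0)); [now intros [|n] | exact is_series_0].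
  - apply (is_series_ext (scons (f x) (fun i => if Nat.ltb i (length L) then f (nth i L d) else 0))).
    + now intros [|n].
    + now apply is_series_scons.
Qed.

Lemma dependent_choice {A : Type} (P : nat -> A -> Prop) (Q : nat -> A -> A -> Prop) (x0 : A) :
  P 0%nat x0 -> (forall j x, P j x -> exists y, P (S j) y /\ Q j x y) ->
  exists f : nat -> A, f 0%nat = x0 /\ forall j, P j (f j) /\ Q j (f j) (f (S j)).
Proof.
  intros H0 Hstep.
  destruct (choice (fun jx y => P (fst jx) (snd jx) -> P (S (fst jx)) y /\ Q (fst jx) (snd jx) y))
    as [g Hg].
  { intros [j x]. simpl. destruct (excluded_middle_informative (P j x)) as [Hx|Hx].
    - destruct (Hstep j x Hx) as [y Hy]. now exists y.
    - exists x. tauto. }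
  set (f := fix f n := match n with O => x0 | S n' => g (n', f n') end).
  assert (Hf : forall j, P j (f j)) by (induction j as [|j IH]; [exact H0 | apply (Hg (j, f j) IH)]).
  exists f. split; [reflexivity|]. intro j. split; [apply Hf | apply (Hg (j, f j) (Hf j))].
Qed.

Section Subdistributions.
Context {Act : Type}.
Notation sdist := (sdist Act).
Notation nexp := (nexp Act).

Lemma dirac_eq (E : nexp) : dirac E E = 1.
Proof. unfold dirac. now destruct (excluded_middle_informative (E = E)). Qed.

Lemma dirac_neq (E s : nexp) : s <> E -> dirac E s = 0.
Proof. unfold dirac. now destruct (excluded_middle_informative (s = E)). Qed.

Lemma dirac_bounds (E s : nexp) : 0 <= dirac E s <= 1.
Proof. unfold dirac. destruct (excluded_middle_informative (s = E)); lra. Qed.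

Lemma sum_dirac_notin (E : nexp) l : ~ In E l -> sum_list (map (dirac E) l) = 0.
Proof.
  induction l as [|x l IH]; simpl; intros H; [reflexivity|].
  rewrite dirac_neq, IH by tauto. ring.
Qed.

Lemma sum_dirac_in (E : nexp) l : NoDup l -> In E l -> sum_list (map (dirac E) l) = 1.
Proof.
  induction 1 as [|x l Hx Hl IH]; simpl; intros HE; [contradiction|].
  destruct (excluded_middle_informative (x = E)) as [<-|Hne].
  - rewrite dirac_eq, sum_dirac_notin by exact Hx. ring.
  - rewrite dirac_neq, IH by (auto; tauto). ring.
Qed.

Lemma sum_dirac_le1 (E : nexp) l : NoDup l -> sum_list (map (dirac E) l) <= 1.
Proof.
  intros Hl. destruct (in_dec (fun x y => excluded_middle_informative (x = y)) E l).
  - rewrite sum_dirac_in; auto; lra.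
  - rewrite sum_dirac_notin; auto; lra.
Qed.

Lemma subdist_le1 (m : sdist) s : subdist m -> m s <= 1.
Proof.
  intros [_ Hm]. specialize (Hm (s :: nil) (NoDup_cons s (@in_nil _ s) (NoDup_nil _))).
  simpl in Hm. lra.
Qed.

Lemma subdist_le (f g : sdist) : (forall s, 0 <= f s <= g s) -> subdist g -> subdist f.
Proof.
  intros Hfg [_ Hg]. split; [intro s; apply Hfg|].
  intros l Hl. apply Rle_trans with (sum_list (map g l)); auto.
  apply sum_list_map_le. intros; apply Hfg.
Qed.

Lemma subdist_empty : subdist (@empty_dist Act).
Proof.
  unfold empty_dist. split; [intro; lra|].
  intros l _. induction l as [|x l IH]; simpl; lra.
Qed.

Lemma subdist_dirac (E : nexp) : subdist (dirac E).
Proof. split; [intro; apply dirac_bounds | intros; now apply sum_dirac_le1]. Qed.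

Lemma pstep_subdist (P : pexp Act) (m : sdist) : pstep P m -> subdist m.
Proof.
  induction 1 as [E|p hp P Q mu nu _ [Hmu0 Hmu1] _ [Hnu0 Hnu1]]; [apply subdist_dirac|]. split.
  - intro s. specialize (Hmu0 s); specialize (Hnu0 s). nra.
  - intros l Hl. rewrite sum_list_map_plus, sum_list_map_scal, (sum_list_map_scal (1 - p) nu).
    specialize (Hmu1 l Hl); specialize (Hnu1 l Hl). nra.
Qed.

Lemma nstep_subdist (E : nexp) (a : Act) (m : sdist) : nstep E a m -> subdist m.
Proof. induction 1; auto. now apply (pstep_subdist P). Qed.

Lemma subdist_series_comb (I : nat -> bool) (p : nat -> R) (nus : nat -> sdist) (nu : sdist) :
  (forall i, 0 <= p i) -> (exists P, is_series (fun i => if I i then p i else 0) P /\ P <= 1) ->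
  (forall i, I i = true -> subdist (nus i)) ->
  (forall s, is_series (fun i => if I i then p i * nus i s else 0) (nu s)) -> subdist nu.
Proof.
  intros Hp [P [HP HP1]] Hnus Hnu. split.
  - intro s. refine (series_nonneg _ _ _ (Hnu s)).
    intro i. destruct (I i) eqn:Ei; [|lra]. apply Rmult_le_pos; [apply Hp | apply (Hnus i Ei)].
  - intros l Hl. apply Rle_trans with P; [|exact HP1].
    refine (series_le _ _ _ _ _ (is_series_sum_list _ nu l (fun s _ => Hnu s)) HP).
    intro i. destruct (I i) eqn:Ei.
    + rewrite sum_list_map_scal. pose proof (proj2 (Hnus i Ei) l Hl). pose proof (Hp i). nra.
    + clear. induction l as [|x l IH]; simpl; lra.
Qed.

Lemma ctrans_subdist (a : Act) (nu mu : sdist) : ctrans a nu mu -> subdist nu /\ subdist mu.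
Proof.
  induction 1 as [E mu H | I p nus mus nu mu _ IH Hp HP Hnu Hmu].
  - split; [apply subdist_dirac | now apply (nstep_subdist E a)].
  - split; [apply (subdist_series_comb I p nus) | apply (subdist_series_comb I p mus)]; auto;
      intros i Hi; apply (IH i Hi).
Qed.

End Subdistributions.

Section Fractions.

(* When [x = 0] the whole share goes to the first term, so that the shares always sum to 1. *)
Definition frac (xs : nat -> R) (x : R) (k : nat) : R :=
  if Req_EM_T x 0 then scons 1 (fun _ => 0) k else xs k / x.

Variables (xs : nat -> R) (x : R).
Hypothesis xs_nonneg : forall k, 0 <= xs k.
Hypothesis xs_sum : is_series xs x.

Lemma frac_nonneg k : 0 <= frac xs x k.
Proof.
  unfold frac. destruct (Req_EM_T x 0) as [_|Hx]; [destruct k; simpl; lra|].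
  pose proof (series_nonneg xs x xs_nonneg xs_sum).
  apply Rmult_le_pos; [apply xs_nonneg | apply Rlt_le, Rinv_0_lt_compat; lra].
Qed.

Lemma is_series_frac : is_series (frac xs x) 1.
Proof.
  unfold frac. destruct (Req_EM_T x 0) as [_|Hx]; [apply is_series_unit|].
  replace 1 with (x * / x) by (field; exact Hx).
  exact (is_series_scal_r (/ x) xs x xs_sum).
Qed.

Lemma frac_mul k : frac xs x k * x = xs k.
Proof.
  unfold frac. destruct (Req_EM_T x 0) as [Hx|Hx]; [|field; exact Hx].
  rewrite Hx, Rmult_0_r. symmetry. apply (series_nonneg_eq0 xs xs_nonneg). now rewrite <- Hx.
Qed.

End Fractions.

Section CombinedTransitions.
Context {Act : Type}.
Notation sdist := (sdist Act).
Notation nexp := (nexp Act).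

Definition split_along (nus : nat -> sdist) (nu rho : sdist) (k : nat) : sdist :=
  fun s => frac (fun k => nus k s) (nu s) k * rho s.

Lemma split_along_nonneg (nus : nat -> sdist) (nu rho : sdist) k s :
  (forall k, 0 <= nus k s) -> is_series (fun k => nus k s) (nu s) -> 0 <= rho s ->
  0 <= split_along nus nu rho k s.
Proof. intros Hnus Hnu Hrho. apply Rmult_le_pos; [now apply frac_nonneg | exact Hrho]. Qed.

Lemma is_series_split_along (nus : nat -> sdist) (nu rho : sdist) s :
  is_series (fun k => nus k s) (nu s) -> is_series (fun k => split_along nus nu rho k s) (rho s).
Proof.
  intros Hnu. pose proof (is_series_scal_r (rho s) _ 1 (is_series_frac _ _ Hnu)) as H.
  rewrite Rmult_1_l in H. exact H.
Qed.

Lemma split_along_plus (nus : nat -> sdist) (A B : sdist) k s :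
  (forall k, 0 <= nus k s) -> is_series (fun k => nus k s) (A s + B s) ->
  split_along nus (fun s => A s + B s) A k s + split_along nus (fun s => A s + B s) B k s = nus k s.
Proof.
  intros Hnus Hsum. unfold split_along. rewrite <- Rmult_plus_distr_l.
  exact (frac_mul (fun k => nus k s) (A s + B s) Hnus Hsum k).
Qed.

Lemma ctrans_ext (a : Act) (nu mu nu' mu' : sdist) :
  (forall s, nu s = nu' s) -> (forall s, mu s = mu' s) -> ctrans a nu mu -> ctrans a nu' mu'.
Proof.
  intros Hnu Hmu H.
  now rewrite <- (functional_extensionality _ _ Hnu), <- (functional_extensionality _ _ Hmu).
Qed.

Lemma ctrans_empty (a : Act) : ctrans a (@empty_dist Act) (@empty_dist Act).
Proof.
  apply (ct_comb (fun _ => false) (fun _ => 0) (fun _ => @empty_dist Act) (fun _ => @empty_dist Act));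
    try discriminate; try (intro; lra).
  - exists 0. split; [exact is_series_0 | lra].
  - intro s. exact is_series_0.
  - intro s. exact is_series_0.
Qed.

Lemma ctrans_scale (a : Act) (c : R) (nu mu : sdist) :
  0 <= c <= 1 -> ctrans a nu mu -> ctrans a (fun s => c * nu s) (fun s => c * mu s).
Proof.
  intros Hc H.
  assert (Hunit : forall x, is_series (fun i : nat => if Nat.eqb i 0 then x else 0) x).
  { intro x. apply (is_series_ext (scons x (fun _ => 0))); [now intros [|i] | apply is_series_unit]. }
  apply (ct_comb (fun i => Nat.eqb i 0) (fun _ => c) (fun _ => nu) (fun _ => mu)); auto.
  - intro; apply Hc.
  - exists c. split; [apply Hunit | apply Hc].
Qed.

Lemma ctrans_split_dirac (a : Act) (E : nexp) (mu : sdist) (nus : nat -> sdist) :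
  nstep E a mu -> (forall k s, 0 <= nus k s) -> (forall s, is_series (fun k => nus k s) (dirac E s)) ->
  exists mus : nat -> sdist, (forall k, ctrans a (nus k) (mus k)) /\
    (forall s, is_series (fun k => mus k s) (mu s)).
Proof.
  intros HE Hnus Hsum.
  set (c k := nus k E).
  assert (Hc : is_series c 1) by (rewrite <- (dirac_eq E); apply Hsum).
  assert (Hnus_c : forall k s, nus k s = c k * dirac E s).
  { intros k s. destruct (excluded_middle_informative (s = E)) as [->|Hne].
    - rewrite dirac_eq. unfold c. ring.
    - rewrite dirac_neq by exact Hne. rewrite Rmult_0_r.
      apply (series_nonneg_eq0 (fun k => nus k s)); [intro; apply Hnus|].
      rewrite <- (dirac_neq E s Hne). apply Hsum. }
  exists (fun k s => c k * mu s). split.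
  - intro k. apply (ctrans_ext a (fun s => c k * dirac E s) (fun s => c k * mu s));
      [intro s; now rewrite Hnus_c | reflexivity |].
    apply ctrans_scale; [|now apply ct_dirac].
    split; [apply Hnus | apply (term_le_series c); auto; intro; apply Hnus].
  - intro s. pose proof (is_series_scal_r (mu s) c 1 Hc) as H. now rewrite Rmult_1_l in H.
Qed.

Lemma ctrans_split (a : Act) (nu mu : sdist) (nus : nat -> sdist) :
  ctrans a nu mu -> (forall k s, 0 <= nus k s) -> (forall s, is_series (fun k => nus k s) (nu s)) ->
  exists mus : nat -> sdist, (forall k, ctrans a (nus k) (mus k)) /\
    (forall s, is_series (fun k => mus k s) (mu s)).
Proof.
  intros H; revert nus.
  induction H as [E mu HE | I p nu mu nu' mu' Hct IH Hp HP Hnu Hmu]; intros nus Hnus Hsum.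
  { now apply ctrans_split_dirac with E. }
  set (pieces i := split_along nus nu' (nu i)).
  assert (Hpieces : forall i, exists ms : nat -> sdist, I i = true ->
            (forall k, ctrans a (pieces i k) (ms k)) /\ forall s, is_series (fun k => ms k s) (mu i s)).
  { intro i. destruct (I i) eqn:Ei; [|now exists (pieces i)].
    destruct (IH i Ei (pieces i)) as [ms Hms]; [| |now exists ms].
    - intros k s. apply split_along_nonneg; [intro; apply Hnus | apply Hsum |].
      apply (ctrans_subdist _ _ _ (Hct i Ei)).
    - intro s. apply is_series_split_along, Hsum. }
  destruct (choice _ Hpieces) as [MS HMS].
  set (A i k s := if I i then p i * MS i k s else 0).
  assert (HA : forall s, (forall k, is_series (fun i => A i k s) (Series (fun i => A i k s))) /\
                         is_series (fun k => Series (fun i => A i k s)) (mu' s)).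
  { intro s. apply (is_series_swap (fun i k => A i k s) (fun i => if I i then p i * mu i s else 0)).
    - intros i k. unfold A. destruct (I i) eqn:Ei; [|lra].
      apply Rmult_le_pos; [apply Hp | apply (ctrans_subdist _ _ _ (proj1 (HMS i Ei) k))].
    - intro i. unfold A. destruct (I i) eqn:Ei; [apply is_series_mult_l, (HMS i Ei) | exact is_series_0].
    - apply Hmu. }
  exists (fun k s => Series (fun i => A i k s)). split; [|intro s; apply HA].
  intro k. apply (ct_comb I p (fun i => pieces i k) (fun i => MS i k)); auto.
  - intros i Hi. apply (HMS i Hi).
  - intro s. rewrite <- (frac_mul (fun k => nus k s) (nu' s) (fun k => Hnus k s) (Hsum s) k).
    apply (is_series_ext
      (fun i => frac (fun k => nus k s) (nu' s) k * (if I i then p i * nu i s else 0))).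
    + intro i. simpl. unfold pieces, split_along. destruct (I i); ring.
    + apply is_series_mult_l, Hnu.
  - intro s. apply HA.
Qed.
End CombinedTransitions.

Lemma mul_div_bounded (w x : R) : 0 <= x <= w -> w * (x / w) = x.
Proof.
  intros Hx. destruct (Req_EM_T w 0) as [->|Hw]; [lra | field; exact Hw].
Qed.

Section FlatTransitions.
Context {Act : Type}.
Notation sdist := (sdist Act).
Notation nexp := (nexp Act).

Record atom := Atom { weight : R; source : nexp; target : sdist }.

Definition valid_atoms (a : Act) (L : list atom) : Prop :=
  forall x, In x L -> 0 <= weight x /\ nstep (source x) a (target x).

Definition total_weight (L : list atom) : R := sum_list (map weight L).

Definition source_mass (L : list atom) : sdist :=
  fun s => sum_list (map (fun x => weight x * dirac (source x) s) L).

Definition target_mass (L : list atom) : sdist :=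
  fun s => sum_list (map (fun x => weight x * target x s) L).

(* A combined transition flattened into countably many finite batches of weighted point
   transitions; batches, rather than single ones, let countably many such representations
   be merged along diagonals. *)
Definition flat_rep (a : Act) (A : nat -> list atom) (nu mu : sdist) : Prop :=
  (forall n, valid_atoms a (A n)) /\
  (forall s, is_series (fun n => source_mass (A n) s) (nu s)) /\
  (forall s, is_series (fun n => target_mass (A n) s) (mu s)).

Lemma weighted_sum_bounds (L : list atom) (f : atom -> R) :
  (forall x, In x L -> 0 <= weight x /\ 0 <= f x <= 1) ->
  0 <= sum_list (map (fun x => weight x * f x) L) <= total_weight L.
Proof.
  unfold total_weight. induction L as [|x L IH]; simpl; intros H; [lra|].
  destruct (H x (or_introl eq_refl)) as [Hw Hf].
  destruct (IH (fun y Hy => H y (or_intror Hy))). split; nra.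
Qed.

Lemma source_mass_bounds (a : Act) (L : list atom) s :
  valid_atoms a L -> 0 <= source_mass L s <= total_weight L.
Proof.
  intros HL. apply weighted_sum_bounds. intros x Hx. split; [apply (HL x Hx) | apply dirac_bounds].
Qed.

Lemma target_mass_bounds (a : Act) (L : list atom) s :
  valid_atoms a L -> 0 <= target_mass L s <= total_weight L.
Proof.
  intros HL. apply weighted_sum_bounds. intros x Hx. destruct (HL x Hx) as [Hw Hstep].
  split; [exact Hw|]. pose proof (nstep_subdist _ _ _ Hstep) as Ht.
  split; [apply Ht | now apply subdist_le1].
Qed.

(* Group the atoms by source: each group weighs at most [nu] at that source. *)
Lemma total_weight_le1 (L : list atom) (nu : sdist) :
  (forall x, In x L -> 0 <= weight x) -> subdist nu ->
  (forall s, source_mass L s <= nu s) -> total_weight L <= 1.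
Proof.
  intros Hw Hnu Hle.
  set (U := nodup (fun x y : nexp => excluded_middle_informative (x = y)) (map source L)).
  unfold total_weight.
  rewrite (sum_list_map_ext weight (fun x => sum_list (map (fun u => weight x * dirac (source x) u) U))).
  - rewrite (sum_list_map_swap (fun x u => weight x * dirac (source x) u)).
    apply Rle_trans with (sum_list (map nu U)); [|apply Hnu, NoDup_nodup].
    apply sum_list_map_le. intros; apply Hle.
  - intros x Hx. rewrite sum_list_map_scal, sum_dirac_in; [ring | apply NoDup_nodup |].
    apply nodup_In, in_map, Hx.
Qed.

Lemma ctrans_atoms (a : Act) (L : list atom) :
  valid_atoms a L ->
  ctrans a (fun s => source_mass L s / total_weight L) (fun s => target_mass L s / total_weight L).
Proof.
  intros HL. destruct (Req_EM_T (total_weight L) 0) as [HW|HW].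
  { assert (Hzero : forall s, source_mass L s = 0 /\ target_mass L s = 0).
    { intro s. pose proof (source_mass_bounds a L s HL). pose proof (target_mass_bounds a L s HL).
      lra. }
    apply (ctrans_ext a (@empty_dist Act) (@empty_dist Act)); [| |apply ctrans_empty];
      intro s; unfold empty_dist;
      [rewrite (proj1 (Hzero s)) | rewrite (proj2 (Hzero s))]; unfold Rdiv; ring. }
  set (W := total_weight L) in *.
  set (x0 := Atom 0 (NNil Act) (@empty_dist Act)).
  assert (HW0 : 0 <= W) by (apply sum_list_map_nonneg; intros x Hx; apply (HL x Hx)).
  assert (Hdiv : forall f : atom -> R,
    sum_list (map (fun x => weight x / W * f x) L) = sum_list (map (fun x => weight x * f x) L) / W).
  { intro f. unfold Rdiv. rewrite Rmult_comm, <- sum_list_map_scal.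
    apply sum_list_map_ext; intros; ring. }
  apply (ct_comb (fun i => Nat.ltb i (length L)) (fun i => weight (nth i L x0) / W)
    (fun i => dirac (source (nth i L x0))) (fun i => target (nth i L x0))).
  - intros i Hi. apply ct_dirac, HL, nth_In, Nat.ltb_lt, Hi.
  - intro i. apply Rmult_le_pos; [|apply Rlt_le, Rinv_0_lt_compat; lra].
    destruct (Nat.lt_ge_cases i (length L)) as [Hi|Hi].
    + apply HL, nth_In, Hi.
    + rewrite nth_overflow by exact Hi. simpl; lra.
  - exists 1. split; [|lra].
    replace 1 with (sum_list (map (fun x => weight x / W * 1) L)); [|rewrite Hdiv].
    + apply (is_series_ext (fun i => if Nat.ltb i (length L) then weight (nth i L x0) / W * 1 else 0)).
      * intro i. simpl. destruct (Nat.ltb i (length L)); ring.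
      * apply (is_series_nth (fun x => weight x / W * 1)).
    + rewrite (sum_list_map_ext _ weight) by (intros; ring).
      change (W / W = 1). field. exact HW.
  - intro s. unfold source_mass. rewrite <- (Hdiv (fun x => dirac (source x) s)).
    apply (is_series_nth (fun x => weight x / W * dirac (source x) s)).
  - intro s. unfold target_mass. rewrite <- (Hdiv (fun x => target x s)).
    apply (is_series_nth (fun x => weight x / W * target x s)).
Qed.

Lemma flat_rep_ctrans (a : Act) (A : nat -> list atom) (nu mu : sdist) :
  flat_rep a A nu mu -> subdist nu -> ctrans a nu mu.
Proof.
  intros [HA [Hnu Hmu]] Hsub.
  set (W n := total_weight (A n)).
  assert (HW : exists P, is_series (fun n => if true then W n else 0) P /\ P <= 1).
  { apply is_series_bounded; [intro n; apply sum_list_map_nonneg; intros x Hx; apply (HA n x Hx)|].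
    intro D. unfold W, total_weight. rewrite <- sum_list_flat_map_seq.
    apply (total_weight_le1 _ nu); [|exact Hsub|].
    - intros x Hx. apply in_flat_map in Hx as [n [_ Hx]]. apply (HA n x Hx).
    - intro s. unfold source_mass. rewrite sum_list_flat_map_seq.
      apply (sum_n_le_series (fun n => source_mass (A n) s)); [|apply Hnu].
      intro n. apply (source_mass_bounds a (A n) s (HA n)). }
  apply (ct_comb (fun _ => true) W (fun n s => source_mass (A n) s / W n)
    (fun n s => target_mass (A n) s / W n)); auto.
  - intros n _. apply ctrans_atoms, HA.
  - intro n. apply sum_list_map_nonneg. intros x Hx. apply (HA n x Hx).
  - intro s. apply (is_series_ext (fun n => source_mass (A n) s)); [|apply Hnu].
    intro n. symmetry. apply mul_div_bounded, (source_mass_bounds a), HA.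
  - intro s. apply (is_series_ext (fun n => target_mass (A n) s)); [|apply Hmu].
    intro n. symmetry. apply mul_div_bounded, (target_mass_bounds a), HA.
Qed.

Definition scale_atom (c : R) (x : atom) : atom := Atom (c * weight x) (source x) (target x).

Definition comb_batches (I : nat -> bool) (p : nat -> R) (AA : nat -> nat -> list atom) (d : nat) :=
  flat_map (fun i => if I i then map (scale_atom (p i)) (AA i (d - i)%nat) else nil) (seq 0 (S d)).

Lemma is_series_comb_batches (I : nat -> bool) (p : nat -> R) (AA : nat -> nat -> list atom)
    (F : atom -> R) (r : nat -> R) S :
  (forall c x, F (scale_atom c x) = c * F x) ->
  (forall i j x, I i = true -> In x (AA i j) -> 0 <= F x) ->
  (forall i, I i = true -> is_series (fun j => sum_list (map F (AA i j))) (r i)) ->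
  (forall i, 0 <= p i) -> is_series (fun i => if I i then p i * r i else 0) S ->
  is_series (fun d => sum_list (map F (comb_batches I p AA d))) S.
Proof.
  intros HF HF0 Hr Hp HS.
  set (b i j := if I i then p i * sum_list (map F (AA i j)) else 0).
  apply (is_series_ext (fun d => sum_n (fun i => b i (d - i)%nat) d)).
  - intro d. unfold comb_batches. rewrite sum_list_flat_map_seq. apply sum_n_ext. intro i.
    unfold b. destruct (I i); simpl; [|reflexivity].
    rewrite map_map, <- sum_list_map_scal. apply sum_list_map_ext. intros; symmetry; apply HF.
  - apply (is_series_diagonal b (fun i => if I i then p i * r i else 0)); auto.
    + intros i j. unfold b. destruct (I i) eqn:Ei; [|lra].
      apply Rmult_le_pos; [apply Hp | apply sum_list_map_nonneg; intros x Hx; now apply (HF0 i j)].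
    + intro i. unfold b. destruct (I i) eqn:Ei; [apply is_series_mult_l, Hr, Ei | exact is_series_0].
Qed.

Lemma flat_rep_comb (a : Act) (I : nat -> bool) (p : nat -> R) (AA : nat -> nat -> list atom)
    (nus mus : nat -> sdist) (nu mu : sdist) :
  (forall i, 0 <= p i) -> (forall i, I i = true -> flat_rep a (AA i) (nus i) (mus i)) ->
  (forall s, is_series (fun i => if I i then p i * nus i s else 0) (nu s)) ->
  (forall s, is_series (fun i => if I i then p i * mus i s else 0) (mu s)) ->
  flat_rep a (comb_batches I p AA) nu mu.
Proof.
  intros Hp HAA Hnu Hmu. split; [|split].
  - intros d x Hx. unfold comb_batches in Hx. apply in_flat_map in Hx as [i [_ Hx]].
    destruct (I i) eqn:Ei; simpl in Hx; [|contradiction].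
    apply in_map_iff in Hx as [y [<- Hy]]. destruct (proj1 (HAA i Ei) _ y Hy) as [Hw Hstep].
    split; [apply Rmult_le_pos; auto | exact Hstep].
  - intro s. apply (is_series_comb_batches I p AA _ (fun i => nus i s)); auto.
    + intros c x. simpl. ring.
    + intros i j x Hi Hx. destruct (proj1 (HAA i Hi) j x Hx) as [Hw _].
      apply Rmult_le_pos; [exact Hw | apply dirac_bounds].
    + intros i Hi. apply (HAA i Hi).
  - intro s. apply (is_series_comb_batches I p AA _ (fun i => mus i s)); auto.
    + intros c x. simpl. ring.
    + intros i j x Hi Hx. destruct (proj1 (HAA i Hi) j x Hx) as [Hw Hstep].
      apply Rmult_le_pos; [exact Hw | apply (nstep_subdist _ _ _ Hstep)].
    + intros i Hi. apply (HAA i Hi).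
Qed.

Lemma ctrans_flat_rep (a : Act) (nu mu : sdist) : ctrans a nu mu -> exists A, flat_rep a A nu mu.
Proof.
  induction 1 as [E mu HE | I p nus mus nu mu _ IH Hp _ Hnu Hmu].
  - exists (scons (Atom 1 E mu :: nil) (fun _ => nil)). split; [|split].
    + intros [|n] x Hx; simpl in Hx; [|contradiction].
      destruct Hx as [<-|[]]. simpl. split; [lra | exact HE].
    + intro s. apply (is_series_ext (scons (dirac E s) (fun _ => 0))); [|apply is_series_unit].
      intros [|n]; unfold source_mass; simpl; ring.
    + intro s. apply (is_series_ext (scons (mu s) (fun _ => 0))); [|apply is_series_unit].
      intros [|n]; unfold target_mass; simpl; ring.
  - destruct (choice (fun i A => I i = true -> flat_rep a A (nus i) (mus i))) as [AA HAA].
    { intro i. destruct (I i) eqn:Ei; [|now exists (fun _ => nil)].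
      destruct (IH i Ei) as [A HA]. now exists A. }
    exists (comb_batches I p AA). now apply flat_rep_comb with nus mus.
Qed.

Lemma ctrans_series (a : Act) (nus mus : nat -> sdist) (nu mu : sdist) :
  (forall k, ctrans a (nus k) (mus k)) -> subdist nu ->
  (forall s, is_series (fun k => nus k s) (nu s)) ->
  (forall s, is_series (fun k => mus k s) (mu s)) -> ctrans a nu mu.
Proof.
  intros Hct Hsub Hnu Hmu.
  destruct (choice (fun k A => flat_rep a A (nus k) (mus k))) as [AA HAA].
  { intro k. apply ctrans_flat_rep, Hct. }
  apply (flat_rep_ctrans a (comb_batches (fun _ => true) (fun _ => 1) AA)); [|exact Hsub].
  apply (flat_rep_comb a _ _ AA nus mus); auto; [intro; lra | |]; intro s;
    [apply (is_series_ext (fun k => nus k s)) | apply (is_series_ext (fun k => mus k s))]; auto;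
    intro k; simpl; ring.
Qed.

Lemma ctrans_sum_n (a : Act) (nus mus : nat -> sdist) N :
  (forall k, (k <= N)%nat -> ctrans a (nus k) (mus k)) ->
  subdist (fun s => sum_n (fun k => nus k s) N) ->
  ctrans a (fun s => sum_n (fun k => nus k s) N) (fun s => sum_n (fun k => mus k s) N).
Proof.
  intros Hct Hsub.
  set (cut (f : nat -> sdist) k := if Nat.leb k N then f k else @empty_dist Act).
  assert (Hcut : forall f s, is_series (fun k => cut f k s) (sum_n (fun k => f k s) N)).
  { intros f s. replace (sum_n (fun k => f k s) N) with (sum_n (fun k => cut f k s) N).
    - apply is_series_finite. intros k Hk. unfold cut.
      destruct (Nat.leb k N) eqn:E; [apply Nat.leb_le in E; lia | reflexivity].
    - apply sum_n_ext_loc. intros k Hk. unfold cut. now rewrite (proj2 (Nat.leb_le k N) Hk). }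
  apply (ctrans_series a (cut nus) (cut mus)); auto.
  intro k. unfold cut. destruct (Nat.leb k N) eqn:E; [apply Hct, Nat.leb_le, E | apply ctrans_empty].
Qed.

End FlatTransitions.

Section Derivations.
Context {Act : Type}.
Notation sdist := (sdist Act).
Variable tau : Act.

Definition ctrans_chain (mt mx : nat -> sdist) : Prop :=
  forall i, ctrans tau (mt i) (fun s => mt (S i) s + mx (S i) s).

Lemma ctrans_chain_scons (x y : sdist) (mt mx : nat -> sdist) :
  ctrans tau x (fun s => mt 0%nat s + mx 0%nat s) -> ctrans_chain mt mx ->
  ctrans_chain (scons x mt) (scons y mx).
Proof. intros Hx Hchain [|i]; [exact Hx | apply Hchain]. Qed.

Lemma derivation_intro (mt mx : nat -> sdist) :
  (forall n s, 0 <= mt n s /\ 0 <= mx n s) -> subdist (mt 0%nat) -> subdist (mx 0%nat) ->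
  (forall n, subdist (mt n) -> ctrans tau (mt n) (fun s => mt (S n) s + mx (S n) s)) ->
  derivation tau mt mx.
Proof.
  intros Hnonneg Hmt0 Hmx0 Hstep.
  assert (Hnext : forall n, subdist (mt n) -> subdist (mt (S n)) /\ subdist (mx (S n))).
  { intros n Hn. pose proof (proj2 (ctrans_subdist _ _ _ (Hstep n Hn))) as Hsum.
    split; refine (subdist_le _ _ _ Hsum); intro s; pose proof (Hnonneg (S n) s); lra. }
  assert (Hmt : forall n, subdist (mt n)) by (induction n; [exact Hmt0 | apply Hnext, IHn]).
  split; [|intro n; apply Hstep, Hmt].
  intros [|n]; [now split | split; [apply Hmt | apply Hnext, Hmt]].
Qed.

(* A decomposition of [et j + ex j] is carried to one of [et (S j) + ex (S j)] by cutting
   [et j] in the same proportions and decomposing its transition with [ctrans_split]. *)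
Lemma derivation_decompositions (et ex : nat -> sdist) (etas : nat -> sdist) :
  ctrans_chain et ex -> (forall j s, 0 <= et j s /\ 0 <= ex j s) -> (forall k s, 0 <= etas k s) ->
  (forall s, is_series (fun k => etas k s) (et 0%nat s + ex 0%nat s)) ->
  exists G : nat -> nat -> sdist, G 0%nat = etas /\ forall j,
    (forall k s, 0 <= G j k s) /\ (forall s, is_series (fun k => G j k s) (et j s + ex j s)) /\
    (forall k, ctrans tau (split_along (G j) (fun s => et j s + ex j s) (et j) k) (G (S j) k)).
Proof.
  intros Hchain Hnonneg Hetas0 Hetas.
  set (P j (D : nat -> sdist) :=
    (forall k s, 0 <= D k s) /\ forall s, is_series (fun k => D k s) (et j s + ex j s)).
  set (Q j (D D' : nat -> sdist) :=
    forall k, ctrans tau (split_along D (fun s => et j s + ex j s) (et j) k) (D' k)).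
  assert (Hstep : forall j D, P j D -> exists D', P (S j) D' /\ Q j D D').
  { intros j D [HD0 HD].
    destruct (ctrans_split tau (et j) _ (split_along D (fun s => et j s + ex j s) (et j)) (Hchain j))
      as [D' [HD'ct HD'sum]].
    - intros k s. apply split_along_nonneg; [intro; apply HD0 | apply HD | apply Hnonneg].
    - intro s. apply is_series_split_along, HD.
    - exists D'. split; [split; [|exact HD'sum] | exact HD'ct].
      intros k s. apply (ctrans_subdist _ _ _ (HD'ct k)). }
  destruct (dependent_choice P Q etas) as [G [HG0 HG]]; [split; assumption | exact Hstep |].
  exists G. split; [exact HG0|]. intro j. destruct (HG j) as [[HG1 HG2] HG3]. now repeat split.
Qed.

Lemma derivation_split (et ex : nat -> sdist) (etas : nat -> sdist) (nu : sdist) :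
  derivation tau et ex -> (forall k s, 0 <= etas k s) ->
  (forall s, is_series (fun k => etas k s) (et 0%nat s + ex 0%nat s)) ->
  (forall s, is_series (fun j => ex j s) (nu s)) ->
  exists tt tx : nat -> nat -> sdist,
    (forall k j s, 0 <= tt k j s /\ 0 <= tx k j s) /\
    (forall k s, etas k s = tt k 0%nat s + tx k 0%nat s) /\
    (forall k, ctrans_chain (tt k) (tx k)) /\
    (forall k s, is_series (fun j => tx k j s) (Series (fun j => tx k j s))) /\
    (forall s, is_series (fun k => Series (fun j => tx k j s)) (nu s)).
Proof.
  intros [Hsub Hchain] Hetas0 Hetas Hnu.
  assert (Hnonneg : forall j s, 0 <= et j s /\ 0 <= ex j s) by (intros j s; split; apply Hsub).
  destruct (derivation_decompositions et ex etas Hchain Hnonneg Hetas0 Hetas) as [G [HG0 HG]].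
  set (tot j s := et j s + ex j s).
  assert (HGnonneg : forall j k s, 0 <= G j k s) by (intros j; apply (HG j)).
  assert (HGsum : forall j s, is_series (fun k => G j k s) (tot j s)) by (intros j; apply (HG j)).
  assert (Hparts : forall j k s, split_along (G j) (tot j) (et j) k s +
                                 split_along (G j) (tot j) (ex j) k s = G j k s).
  { intros j k s. apply split_along_plus; [intro; apply HGnonneg | apply HGsum]. }
  assert (Hpieces0 : forall j k s, 0 <= split_along (G j) (tot j) (et j) k s /\
                                   0 <= split_along (G j) (tot j) (ex j) k s).
  { intros j k s.
    split; (apply split_along_nonneg; [intro; apply HGnonneg | apply HGsum | apply Hnonneg]). }
  assert (Hswap := fun s => is_series_swap (fun j k => split_along (G j) (tot j) (ex j) k s)
    (fun j => ex j s) (nu s) (fun j k => proj2 (Hpieces0 j k s))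
    (fun j => is_series_split_along (G j) (tot j) (ex j) s (HGsum j s)) (Hnu s)).
  exists (fun k j => split_along (G j) (tot j) (et j) k),
         (fun k j => split_along (G j) (tot j) (ex j) k).
  split; [|split; [|split; [|split]]].
  - intros k j s. apply Hpieces0.
  - intros k s. rewrite Hparts, HG0. reflexivity.
  - intros k j. apply (ctrans_ext tau (split_along (G j) (tot j) (et j) k) (G (S j) k));
      [reflexivity | intro s; symmetry; apply Hparts | apply HG].
  - intros k s. apply Hswap.
  - intro s. apply Hswap.
Qed.

Section Graft.
Variables (mt mx : nat -> sdist) (tt tx : nat -> nat -> sdist).
Hypothesis mt_chain : ctrans_chain mt mx.
Hypothesis tt_chain : forall k, ctrans_chain (tt k) (tx k).
Hypothesis mx_start : forall k s, mx k s = tt k 0%nat s + tx k 0%nat s.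
Hypothesis mt_nonneg : forall n s, 0 <= mt n s.
Hypothesis tt_tx_nonneg : forall k j s, 0 <= tt k j s /\ 0 <= tx k j s.

(* The derivation that continues the part [mx k] stopped at time [k] by the chain [tt k]. *)
Definition graft_t (n : nat) : sdist := fun s => mt n s + sum_n (fun k => tt k (n - k)%nat s) n.
Definition graft_x (n : nat) : sdist := fun s => sum_n (fun k => tx k (n - k)%nat s) n.

Lemma graft_step n :
  subdist (graft_t n) -> ctrans tau (graft_t n) (fun s => graft_t (S n) s + graft_x (S n) s).
Proof.
  intros Hsub.
  set (nus := scons (mt n) (fun k => tt k (n - k)%nat)).
  set (mus := scons (fun s => mt (S n) s + mx (S n) s)
                    (fun k s => tt k (S (n - k)) s + tx k (S (n - k)) s)).
  assert (Hnus : forall s, sum_n (fun k => nus k s) (S n) = graft_t n s).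
  { intro s. rewrite (sum_n_ext _ (scons (mt n s) (fun k => tt k (n - k)%nat s))) by now intros [|k].
    now rewrite sum_n_scons. }
  assert (Hmus : forall s, sum_n (fun k => mus k s) (S n) = graft_t (S n) s + graft_x (S n) s).
  { intro s. rewrite (sum_n_ext _ (scons (mt (S n) s + mx (S n) s)
      (fun k => tt k (S (n - k)) s + tx k (S (n - k)) s))) by now intros [|k].
    unfold graft_t, graft_x. rewrite sum_n_scons,
      (sum_n_diagonal_S (fun k j => tt k j s)), (sum_n_diagonal_S (fun k j => tx k j s)).
    rewrite (sum_n_plus (fun k => tt k (S (n - k)) s) (fun k => tx k (S (n - k)) s)), mx_start.
    unfold plus; simpl. ring. }
  apply (ctrans_ext tau _ _ _ _ Hnus Hmus), ctrans_sum_n.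
  - intros [|k] _; [apply mt_chain | apply tt_chain].
  - apply (subdist_le _ (graft_t n)); [|exact Hsub]. intro s. rewrite Hnus.
    split; [apply (proj1 Hsub) | lra].
Qed.

Lemma graft_start s : graft_t 0%nat s + graft_x 0%nat s = mt 0%nat s + mx 0%nat s.
Proof. unfold graft_t, graft_x. rewrite !sum_O, mx_start. simpl. ring. Qed.

Lemma graft_derivation : subdist (fun s => mt 0%nat s + mx 0%nat s) -> derivation tau graft_t graft_x.
Proof.
  intros Hsub.
  assert (Hnonneg : forall n s, 0 <= graft_t n s /\ 0 <= graft_x n s).
  { intros n s. pose proof (mt_nonneg n s).
    pose proof (sum_n_nonneg (fun k => tt k (n - k)%nat s) n (fun k => proj1 (tt_tx_nonneg _ _ s))).
    pose proof (sum_n_nonneg (fun k => tx k (n - k)%nat s) n (fun k => proj2 (tt_tx_nonneg _ _ s))).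
    unfold graft_t, graft_x. lra. }
  apply derivation_intro; [exact Hnonneg | | | exact graft_step];
    refine (subdist_le _ _ _ Hsub); intro s; rewrite <- graft_start;
    pose proof (Hnonneg 0%nat s); lra.
Qed.

Lemma is_series_graft_x (r : nat -> sdist) (nu : sdist) :
  (forall k s, is_series (fun j => tx k j s) (r k s)) -> (forall s, is_series (fun k => r k s) (nu s)) ->
  forall s, is_series (fun n => graft_x n s) (nu s).
Proof.
  intros Hr Hnu s. apply (is_series_diagonal (fun k j => tx k j s) (fun k => r k s)); auto.
  intros; apply tt_tx_nonneg.
Qed.

End Graft.

Definition delayed_wtrans (mu nu : sdist) : Prop :=
  exists mt mx : nat -> sdist, derivation tau mt mx /\
    (forall s, mu s = mt 0%nat s + mx 0%nat s) /\
    (forall s, is_series (fun i => mx i s) (nu s)) /\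
    (forall s, mx 0%nat s = empty_dist s).

Lemma wtrans_refl (mu : sdist) : subdist mu -> wtrans tau mu mu.
Proof.
  intros Hmu. exists (fun _ => @empty_dist Act), (scons mu (fun _ => @empty_dist Act)).
  split; [split|split].
  - intros [|i]; split; auto using subdist_empty.
  - intro i. apply (ctrans_ext tau (@empty_dist Act) (@empty_dist Act));
      [reflexivity | intro s; unfold empty_dist; simpl; ring | apply ctrans_empty].
  - intro s. unfold empty_dist. simpl. ring.
  - intro s. apply (is_series_ext (scons (mu s) (fun _ => 0))); [now intros [|i] | apply is_series_unit].
Qed.

Lemma step_wtrans_delayed (mu nu : sdist) :
  subdist mu -> (exists rho, ctrans tau mu rho /\ wtrans tau rho nu) -> delayed_wtrans mu nu.
Proof.
  intros Hmu [rho [Hct [mt [mx [[Hsub Hchain] [Hrho Hnu]]]]]].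
  exists (scons mu mt), (scons (@empty_dist Act) mx). split; [split|split; [|split]].
  - intros [|i]; [split; auto using subdist_empty | apply Hsub].
  - apply ctrans_chain_scons; [|exact Hchain].
    apply (ctrans_ext tau mu rho); [reflexivity | exact Hrho | exact Hct].
  - intro s. unfold empty_dist. simpl. ring.
  - intro s. rewrite <- (Rplus_0_l (nu s)).
    apply (is_series_ext (scons 0 (fun i => mx i s))); [now intros [|i] | apply is_series_scons, Hnu].
  - reflexivity.
Qed.

Lemma delayed_step_wtrans (mu nu : sdist) :
  delayed_wtrans mu nu -> exists rho, ctrans tau mu rho /\ wtrans tau rho nu.
Proof.
  intros [mt [mx [[Hsub Hchain] [Hmu [Hnu Hmx0]]]]].
  exists (fun s => mt 1%nat s + mx 1%nat s). split.
  - apply (ctrans_ext tau (mt 0%nat) (fun s => mt 1%nat s + mx 1%nat s)); [|reflexivity|apply Hchain].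
    intro s. rewrite Hmu, Hmx0. unfold empty_dist. ring.
  - exists (fun i => mt (S i)), (fun i => mx (S i)). split; [split|split].
    + intro i. apply Hsub.
    + intro i. apply Hchain.
    + reflexivity.
    + intro s. pose proof (is_series_tail _ _ (Hnu s)) as H. cbv beta in H. rewrite Hmx0 in H.
      unfold empty_dist in H. now rewrite Rminus_0_r in H.
Qed.

Lemma wtrans_act_delayed (mu nu : sdist) : subdist mu -> wtrans_act tau tau mu nu -> delayed_wtrans mu nu.
Proof.
  intros Hmu [rho [eta [[mt [mx [[Hsub Hchain] [Hmu0 Hrho]]]] [Hct [et [ex [Hder [Heta Hnu]]]]]]]].
  destruct (ctrans_split tau rho eta mx Hct) as [etas [Hetas_ct Hetas]];
    [intros; apply Hsub | exact Hrho |].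
  destruct (derivation_split et ex etas nu Hder) as [tt [tx [Hnonneg [Hstart [Htt [Hr Hsum]]]]]];
    [intros k s; apply (ctrans_subdist _ _ _ (Hetas_ct k)) | intro s; rewrite <- Heta; apply Hetas |
     exact Hnu |].
  set (tt' k := scons (mx k) (tt k)). set (tx' k := scons (@empty_dist Act) (tx k)).
  assert (Hnonneg' : forall k j s, 0 <= tt' k j s /\ 0 <= tx' k j s).
  { intros k [|j] s; [split; [apply Hsub | unfold tx', empty_dist; simpl; lra] | apply Hnonneg]. }
  assert (Hstart' : forall k s, mx k s = tt' k 0%nat s + tx' k 0%nat s).
  { intros k s. unfold tt', tx', empty_dist. simpl. ring. }
  exists (graft_t mt tt'), (graft_x tx'). split; [|split; [|split]].
  - apply (graft_derivation mt mx tt' tx'); auto.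
    + intro k. apply ctrans_chain_scons; [|apply Htt].
      apply (ctrans_ext tau (mx k) (etas k)); [reflexivity | apply Hstart | apply Hetas_ct].
    + intros; apply Hsub.
    + apply (subdist_le _ mu); [|exact Hmu]. intro s. rewrite <- Hmu0.
      split; [apply Hmu | lra].
  - intro s. rewrite (graft_start mt mx tt' tx' Hstart'). apply Hmu0.
  - apply (is_series_graft_x tt' tx' Hnonneg' (fun k s => Series (fun j => tx k j s))); [|exact Hsum].
    intros k s. rewrite <- Rplus_0_l.
    apply (is_series_ext (scons 0 (fun j => tx k j s))); [now intros [|j] | apply is_series_scons, Hr].
  - intro s. unfold graft_x. now rewrite sum_O.
Qed.

End Derivations.

Theorem mainTheorem10 (Act : Type) (tau : Act) (mu nu : sdist Act) :
  subdist mu -> subdist nu ->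
  (wtrans_act tau tau mu nu <->
     exists rho, ctrans tau mu rho /\ wtrans tau rho nu) /\
  ((exists rho, ctrans tau mu rho /\ wtrans tau rho nu) <->
     exists mt mx : nat -> sdist Act, derivation tau mt mx /\
       (forall s, mu s = mt 0%nat s + mx 0%nat s) /\
       (forall s, is_series (fun i => mx i s) (nu s)) /\
       (forall s, mx 0%nat s = empty_dist s)).
Proof.
  intros Hmu _.
  assert (Hbc : (exists rho, ctrans tau mu rho /\ wtrans tau rho nu) <-> delayed_wtrans tau mu nu).
  { split; [now apply step_wtrans_delayed | apply delayed_step_wtrans]. }
  split; [split | exact Hbc].
  - intro H. apply Hbc. now apply wtrans_act_delayed.
  - intros [rho [Hct Hw]]. exists mu, rho. split; [now apply wtrans_refl | now split].
Qed.
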